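(* Let $H=(V,f)$ be a separated labeled hypergraph, let $W\subseteq V$ be the set of vertices of $H$ that are not closed, and let $H'=H|_W$ be the induced subhypergraph obtained by removing all closed vertices (and contracting the edges containing them). Then $\mathcal A[H]=k[H]$ if and only if $\mathcal A[H']=k[H']$.
   Context: Let $k$ be a field and $S=k[x_1,\dots,x_n,y]$. For an integral convex polytope $\mathcal P\subseteq\mathbb R^n_{\ge 0}$, the Ehrhart ring $\mathcal A[\mathcal P]$ is the $k$-subspace (a subalgebra) of $S$ spanned by the monomials $x^{\mathbf a}y^t$ with $t\in\mathbb N$ and $\mathbf a\in t\mathcal P\cap\mathbb Z^n$; the polytopal (toric) ring is $k[\mathcal P]=k[x^{\mathbf a}y:\mathbf a\in\mathcal P\cap\mathbb Z^n]\subseteq S$. A labeled hypergraph $H=(V,f)$ on a finite set $V$ with alphabet $\{x_1,\dots,x_n\}$ is a function $f:\{x_1,\dots,x_n\}\to\mathcal P(V)$; its edges are the nonempty sets in the image of $f$, and the labels of an edge $E$ are the $x$ with $f(x)=E$. $H$ is separated if for all distinct $v,w\in V$ there are edges $F,G$ with $v\in F\setminus G$, $w\in G\setminus F$. For separated $H$, let $m_v=\prod_{x:\,v\in f(x)}x=x^{\mathbf a_v}$ ($v\in V$), let $\mathcal P_H$ be the convex hull of $\{\mathbf a_v:v\in V\}$ (a 0-1 polytope), and set $\mathcal A[H]=\mathcal A[\mathcal P_H]$, $k[H]=k[\mathcal P_H]$. A vertex $v$ is closed if $\{v\}$ is an edge of $H$. For $W\subseteq V$, the induced subhypergraph is $H|_W=(W,f_W)$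 with $f_W(x)=f(x)\cap W$ (it is again separated). *)

From Stdlib Require Import List.
From HB Require Import structures.
From mathcomp Require Import all_boot all_order all_algebra.
Set Implicit Arguments. Unset Strict Implicit. Unset Printing Implicit Defensive.
Import Order.TTheory GRing.Theory Num.Theory.
Local Open Scope ring_scope.

(* A labeled hypergraph H = (V, f) with alphabet {x_1..x_n} (indexed by 'I_n)
   is a function f : 'I_n -> {set V}. *)

Definition is_edge (n : nat) (V : finType) (f : 'I_n -> {set V}) (E : {set V}) : Prop :=
  E != set0 /\ exists i : 'I_n, f i = E.

Definition separated (n : nat) (V : finType) (f : 'I_n -> {set V}) : Prop :=
  forall v w : V, v != w ->
    exists F G : {set V}, [/\ is_edge f F, is_edge f G,
      (v \in F) && (v \notin G) & (w \in G) && (w \notin F)].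

Definition closed_vertex (n : nat) (V : finType) (f : 'I_n -> {set V}) (v : V) : bool :=
  [exists i : 'I_n, f i == [set v]].

Definition nonclosed (n : nat) (V : finType) (f : 'I_n -> {set V}) : {set V} :=
  [set v | ~~ closed_vertex f v].

Definition induced (n : nat) (V : finType) (f : 'I_n -> {set V}) (W : {set V})
  : 'I_n -> {set {v : V | v \in W}} :=
  fun i => [set w : {v : V | v \in W} | val w \in f i].

(* exponent vector a_v of m_v = prod_{x : v \in f x} x *)
Definition vertex_vec (n : nat) (V : finType) (f : 'I_n -> {set V}) (v : V) : 'I_n -> nat :=
  fun i => nat_of_bool (v \in f i).

Definition in_dilate (R : realFieldType) (n : nat) (T : finType)
  (p : T -> 'I_n -> nat) (t : nat) (a : 'I_n -> nat) : Prop :=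
  exists lam : T -> R,
    [/\ forall v, 0 <= lam v,
        \sum_(v : T) lam v = t%:R
      & forall i : 'I_n, (a i)%:R = \sum_(v : T) lam v * (p v i)%:R].

(* Monomial x^a y^t lies in the Ehrhart ring A[P]. *)
Definition ehrhart_monomial (R : realFieldType) (n : nat) (T : finType)
  (p : T -> 'I_n -> nat) (t : nat) (a : 'I_n -> nat) : Prop :=
  in_dilate R p t a.

(* Monomial x^a y^t lies in the polytopal ring k[P] = k[x^b y : b \in P \cap Z^n],
   i.e. it is a product of t generators x^b y. *)
Definition toric_monomial (R : realFieldType) (n : nat) (T : finType)
  (p : T -> 'I_n -> nat) (t : nat) (a : 'I_n -> nat) : Prop :=
  exists s : seq ('I_n -> nat),
    [/\ size s = t, forall b, List.In b s -> in_dilate R p 1 b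
      & forall i : 'I_n, a i = (\sum_(b <- s) b i)%N].

(* A[P] = k[P]: both are k-spans of monomials, so they coincide iff they
   contain the same monomials. *)
Definition ehrhart_eq_toric (R : realFieldType) (n : nat) (T : finType)
  (p : T -> 'I_n -> nat) : Prop :=
  forall (t : nat) (a : 'I_n -> nat),
    ehrhart_monomial R p t a <-> toric_monomial R p t a.

(* A closed vertex v comes with a private label i, f i = {v}, so in every
   convex representation of a lattice point a the weight of v is the integer
   a_i.  Hence a point of t P_H splits as a_i copies of the vertex a_v plus a
   point of (t - a_i) P_H with the weight of v removed; peeling off all closed
   vertices leaves a point of P_{H'}, so A[H'] = k[H'] gives A[H] = k[H].
   Conversely the points of t P_{H'} are the points of t P_H vanishing on all
   private labels; this vanishing is inherited by every summand of a
   decomposition into points of P_H, and such summands lie in P_{H'}. *)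
From HB Require Import structures.
From mathcomp Require Import all_boot all_order all_algebra.
Set Implicit Arguments. Unset Strict Implicit. Unset Printing Implicit Defensive.
Import Order.TTheory GRing.Theory Num.Theory.
Local Open Scope ring_scope.

Section Dilates.
Variables (R : realFieldType) (n : nat) (T : finType) (p : T -> 'I_n -> nat).

Definition dilate_coeffs (lam : T -> R) (t : nat) (a : 'I_n -> nat) : Prop :=
  [/\ forall v, 0 <= lam v, \sum_v lam v = t%:R
    & forall i, (a i)%:R = \sum_v lam v * (p v i)%:R].

Definition zero_at (lam : T -> R) (v u : T) : R := if u == v then 0 else lam u.

Lemma eq_in_dilate t a b : a =1 b -> in_dilate R p t a -> in_dilate R p t b.
Proof. by move=> eq_ab [lam [lam_ge0 sum_lam lam_a]]; exists lam; split=> // i; rewrite -eq_ab. Qed.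

Lemma in_dilate0 : in_dilate R p 0 (fun=> 0%N).
Proof.
exists (fun=> 0); split=> //; first by rewrite big1.
by move=> i; rewrite big1 // => v _; rewrite mul0r.
Qed.

Lemma in_dilateD t1 t2 a1 a2 :
  in_dilate R p t1 a1 -> in_dilate R p t2 a2 ->
  in_dilate R p (t1 + t2) (fun i => a1 i + a2 i)%N.
Proof.
move=> [l1 [l1_ge0 sum_l1 l1_a]] [l2 [l2_ge0 sum_l2 l2_a]].
exists (fun v => l1 v + l2 v); split.
- by move=> v; rewrite addr_ge0.
- by rewrite big_split /= sum_l1 sum_l2 natrD.
- by move=> i; rewrite natrD l1_a l2_a -big_split; apply: eq_bigr => v _; rewrite mulrDl.
Qed.

Lemma in_dilate_vertex v : in_dilate R p 1 (p v).
Proof.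
exists (fun u => (u == v)%:R); split.
- by move=> u; rewrite ler0n.
- by rewrite (bigD1 v) //= eqxx big1 ?addr0 // => u /negbTE ->.
- move=> i; rewrite (bigD1 v) //= eqxx mul1r big1 ?addr0 // => u /negbTE ->.
  by rewrite mul0r.
Qed.

Lemma toric_monomial_ehrhart t a :
  toric_monomial R p t a -> ehrhart_monomial R p t a.
Proof.
move=> [s [<- s_P a_s]]; apply: eq_in_dilate (fun i => esym (a_s i)) _.
elim: s {a_s} s_P => [_ | b s IHs s_P].
  by apply: eq_in_dilate in_dilate0 => i; rewrite big_nil.
apply: eq_in_dilate (in_dilateD (s_P b (or_introl erefl))
                                (IHs (fun c c_s => s_P c (or_intror c_s)))) => i.
by rewrite big_cons.
Qed.

Lemma eq_toric_monomial t a b :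
  a =1 b -> toric_monomial R p t a -> toric_monomial R p t b.
Proof. by move=> eq_ab [s [size_s s_P a_s]]; exists s; split=> // i; rewrite -eq_ab. Qed.

Lemma toric_monomialD t1 t2 a1 a2 :
  toric_monomial R p t1 a1 -> toric_monomial R p t2 a2 ->
  toric_monomial R p (t1 + t2) (fun i => a1 i + a2 i)%N.
Proof.
move=> [s1 [size_s1 s1_P a1_s1]] [s2 [size_s2 s2_P a2_s2]]; exists (s1 ++ s2); split.
- by rewrite size_cat size_s1 size_s2.
- by move=> b /List.in_app_iff [] ?; [apply: s1_P | apply: s2_P].
- by move=> i; rewrite big_cat a1_s1 a2_s2.
Qed.

Lemma toric_monomial_scale c b :
  in_dilate R p 1 b -> toric_monomial R p c (fun i => c * b i)%N.
Proof.
move=> b_P; elim: c => [|c IHc].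
  by exists [::]; split=> // i; rewrite big_nil.
have b_toric : toric_monomial R p 1 b.
  by exists [:: b]; split=> [|_ [<- | []] | i] //; rewrite big_seq1.
by apply: eq_toric_monomial (toric_monomialD b_toric IHc) => i; rewrite mulSn.
Qed.

Lemma leq_summand_In (s : seq ('I_n -> nat)) b i :
  List.In b s -> (b i <= \sum_(c <- s) c i)%N.
Proof.
elim: s => [|c s IHs] //= [-> | b_s]; rewrite big_cons; first exact: leq_addr.
exact: leq_trans (IHs b_s) (leq_addl _ _).
Qed.

Lemma sum_private_coord (lam : T -> R) v i :
  (forall u, p u i = (u == v) :> nat) -> \sum_u lam u * (p u i)%:R = lam v.
Proof.
move=> p_i; rewrite (bigD1 v) //= p_i eqxx mulr1 big1 ?addr0 // => u /negbTE u_v.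
by rewrite p_i u_v mulr0.
Qed.

Lemma sum_zero_at (lam : T -> R) v (G : T -> R) :
  \sum_u lam u * G u = lam v * G v + \sum_u zero_at lam v u * G u.
Proof.
rewrite (bigD1 v) //= [X in _ = _ + X](bigD1 v) //= /zero_at eqxx mul0r add0r.
by congr (_ + _); apply: eq_bigr => u /negbTE ->.
Qed.

Lemma natr_eq_addr (x c : nat) (y : R) :
  0 <= y -> x%:R = c%:R + y -> (c <= x)%N /\ y = (x - c)%:R.
Proof.
move=> y_ge0 x_cy; have c_x : (c <= x)%N by rewrite -(ler_nat R) x_cy lerDl.
by split=> //; rewrite natrB // x_cy addrC addKr.
Qed.

(* Since i is a private coordinate of v, the weight of v is the integer a_i. *)
Lemma dilate_coeffs_peel lam t a v i :
  dilate_coeffs lam t a -> (forall u, p u i = (u == v) :> nat) ->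
  exists t' a', [/\ t = (t' + a i)%N, a =1 (fun j => a' j + a i * p v j)%N
                  & dilate_coeffs (zero_at lam v) t' a'].
Proof.
move=> [lam_ge0 sum_lam lam_a] p_i.
have lam_v : lam v = (a i)%:R by rewrite lam_a (sum_private_coord _ p_i).
have zero_at_ge0 u : 0 <= zero_at lam v u by rewrite /zero_at; case: eqP.
have [i_t sum_t'] : (a i <= t)%N /\ \sum_u zero_at lam v u = (t - a i)%:R.
  apply: natr_eq_addr; first by apply: sumr_ge0.
  rewrite -sum_lam -lam_v (eq_bigr _ (fun u _ => esym (mulr1 (lam u)))).
  by rewrite (sum_zero_at _ v) mulr1; under eq_bigr do rewrite mulr1.
have coord j : (a i * p v j <= a j)%N /\
    \sum_u zero_at lam v u * (p u j)%:R = (a j - a i * p v j)%:R.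
  apply: natr_eq_addr; first by apply: sumr_ge0 => u _; rewrite mulr_ge0.
  by rewrite lam_a (sum_zero_at _ v) lam_v natrM.
exists (t - a i)%N, (fun j => a j - a i * p v j)%N; split.
- by rewrite subnK.
- by move=> j; rewrite subnK; have [] := coord j.
- by split=> // j; have [_ ->] := coord j.
Qed.

End Dilates.

Section InducedOnNonclosed.
Variables (R : realFieldType) (n : nat) (V : finType) (f : 'I_n -> {set V}).
Let W := nonclosed f.
Let S := {v : V | v \in W}.
Let p := vertex_vec f.
Let p' := vertex_vec (induced f W).

Lemma vertex_vec_singleton i v : f i = [set v] -> forall u, p u i = (u == v).
Proof. by move=> f_i u; rewrite /p /vertex_vec f_i in_set1. Qed.

Lemma singleton_label_nonclosedN i v : f i = [set v] -> v \notin W.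
Proof. by move=> f_i; rewrite inE negbK; apply/existsP; exists i; rewrite f_i. Qed.

Lemma nonclosedN_singleton_label v : v \notin W -> exists i, f i = [set v].
Proof. by rewrite inE negbK => /existsP [i /eqP f_i]; exists i. Qed.

Lemma vertex_vec_induced (w : S) i : p' w i = p (val w) i.
Proof. by rewrite /p' /p /vertex_vec /induced inE. Qed.

Lemma sum_nonclosed (F : V -> R) :
  (forall v, v \notin W -> F v = 0) -> \sum_v F v = \sum_(w : S) F (val w).
Proof.
move=> F_closed; rewrite (bigID (mem W)) /= [X in _ + X]big1 ?addr0.
  by rewrite (big_sub W).
by move=> v /F_closed.
Qed.

Definition zero_ext (lam : S -> R) (v : V) : R :=
  if insub v is Some w then lam w else 0.

Lemma zero_ext_val lam (w : S) : zero_ext lam (val w) = lam w.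
Proof. by rewrite /zero_ext valK. Qed.

Lemma zero_ext_closed lam v : v \notin W -> zero_ext lam v = 0.
Proof. by move=> v_W; rewrite /zero_ext insubN. Qed.

Lemma in_dilate_induced t a : in_dilate R p' t a -> in_dilate R p t a.
Proof.
move=> [lam [lam_ge0 sum_lam lam_a]]; exists (zero_ext lam); split.
- by move=> v; rewrite /zero_ext; case: insub.
- rewrite -sum_lam sum_nonclosed; last exact: zero_ext_closed.
  by apply: eq_bigr => w _; rewrite zero_ext_val.
- move=> i; rewrite lam_a sum_nonclosed; last first.
    by move=> v /zero_ext_closed ->; rewrite mul0r.
  by apply: eq_bigr => w _; rewrite zero_ext_val vertex_vec_induced.
Qed.

Lemma dilate_coeffs_induced (lam : V -> R) t a :
  (forall v, v \notin W -> lam v = 0) -> dilate_coeffs p lam t a ->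
  in_dilate R p' t a.
Proof.
move=> lam_closed [lam_ge0 sum_lam lam_a]; exists (fun w => lam (val w)); split=> //.
- by rewrite -sum_lam sum_nonclosed.
- move=> i; rewrite lam_a sum_nonclosed; last by move=> v /lam_closed ->; rewrite mul0r.
  by apply: eq_bigr => w _; rewrite vertex_vec_induced.
Qed.

Lemma in_dilate_induced_singleton t a i v :
  in_dilate R p' t a -> f i = [set v] -> a i = 0%N.
Proof.
move=> [lam [_ _ lam_a]] f_i; apply/eqP; rewrite -(eqr_nat R) lam_a big1 // => w _.
rewrite vertex_vec_induced (vertex_vec_singleton f_i).
have /negbTE -> : val w != v.
  by apply: contraNneq (singleton_label_nonclosedN f_i) => <-; exact: valP.
by rewrite mulr0.
Qed.

Lemma in_dilate_restr_induced t b :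
  (forall i v, f i = [set v] -> b i = 0%N) -> in_dilate R p t b ->
  in_dilate R p' t b.
Proof.
move=> b_singleton [lam lam_b]; have [_ _ lam_b_coord] := lam_b.
apply: dilate_coeffs_induced lam_b => v v_W; have [i f_i] := nonclosedN_singleton_label v_W.
by rewrite -(sum_private_coord lam (vertex_vec_singleton f_i)) -lam_b_coord (b_singleton _ _ f_i).
Qed.

Lemma ehrhart_eq_toric_induced :
  ehrhart_eq_toric R p -> ehrhart_eq_toric R p'.
Proof.
move=> eq_p t a; split; last exact: toric_monomial_ehrhart.
move=> a_P'; have [s [size_s s_P a_s]] := (eq_p t a).1 (in_dilate_induced a_P').
exists s; split=> // b b_s; apply: in_dilate_restr_induced (s_P b b_s) => i v f_i.
apply/eqP; rewrite -leqn0 -(in_dilate_induced_singleton a_P' f_i) a_s.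
exact: leq_summand_In.
Qed.

Lemma toric_monomial_dilate_coeffs (r : seq V) (lam : V -> R) t a :
  ehrhart_eq_toric R p' -> (forall v, v \notin W -> v \notin r -> lam v = 0) ->
  dilate_coeffs p lam t a -> toric_monomial R p t a.
Proof.
move=> eq_p'; elim: r lam t a => [|v r IHr] lam t a lam_closed lam_a.
  have [s [size_s s_P' a_s]] := (eq_p' t a).1 (dilate_coeffs_induced
    (fun v v_W => lam_closed v v_W isT) lam_a).
  by exists s; split=> // b /s_P'; exact: in_dilate_induced.
have [v_W | v_W] := boolP (v \in W).
  apply: IHr lam_a => u u_W u_r; apply: (lam_closed _ u_W).
  by rewrite inE negb_or u_r andbT; apply: contraNneq u_W => ->.
have [i f_i] := nonclosedN_singleton_label v_W.
have [t' [a' [-> a_a' lam'_a']]] :=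
  dilate_coeffs_peel lam_a (vertex_vec_singleton f_i).
apply: eq_toric_monomial (fun j => esym (a_a' j)) _.
apply: toric_monomialD (toric_monomial_scale _ (in_dilate_vertex R p v)).
apply: IHr lam'_a' => u u_W u_r; rewrite /zero_at; case: eqP => // /eqP u_v.
by apply: lam_closed u_W _; rewrite inE negb_or u_v.
Qed.

Lemma ehrhart_eq_toric_of_induced :
  ehrhart_eq_toric R p' -> ehrhart_eq_toric R p.
Proof.
move=> eq_p' t a; split; last exact: toric_monomial_ehrhart.
move=> [lam lam_a]; have lam_closed v : v \notin W -> v \notin enum V -> lam v = 0.
  by rewrite mem_enum.
exact: toric_monomial_dilate_coeffs eq_p' lam_closed lam_a.
Qed.

End InducedOnNonclosed.

Theorem proposition3p3 (R : realFieldType) (n : nat) (V : finType)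
  (f : 'I_n -> {set V}) :
  separated f ->
  (ehrhart_eq_toric R (vertex_vec f) <->
   ehrhart_eq_toric R (vertex_vec (induced f (nonclosed f)))).
Proof.
move=> _; split; [exact: ehrhart_eq_toric_induced | exact: ehrhart_eq_toric_of_induced].
Qed.
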